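(* Let $D$ be a division algebra and $\sigma\in\mathrm{Aut}(D)$. Let $D(t;\sigma)$ be the division ring of (left) fractions of the skew polynomial ring $D[t;\sigma]$, and let $S$ be the subring of $D(t;\sigma)$ generated by $D$, $t$ and $t^{-1}$. Then $S$ is automorphically normalizable over $D$ if and only if $\sigma$ is of finite inner order.
   Context: All rings are associative with unity. $D[t;\sigma]$ is the skew polynomial ring with $ta=\sigma(a)t$ for $a\in D$; it is an Ore domain, so it has a division ring of fractions. An automorphism $\sigma$ has finite inner order if $\sigma^k$ is an inner automorphism $r\mapsto crc^{-1}$ for some positive integer $k$ and $c\in D^\times$. For a ring $S\supseteq D$, $a\in S$ is automorphic over $D$ with respect to $\tau\in\mathrm{Aut}(D)$ if $ab=\tau(b)a$ for all $b\in D$. Commuting $a_1,\ldots,a_m\in S$ are (left) algebraically independent over $D$ if monomials in them are left linearly independent over $D$. $S$ is automorphically normalizable over $D$ if there exist $m\ge0$ and commuting $a_1,\ldots,a_m\in S$, automorphic over $D$ with respect to pairwise commuting automorphisms, left algebraically independent over $D$, such that $S$ is finitely generated as a left module over the subring $D[a_1,\ldots,a_m]$ generated by $D\cup\{a_1,\ldots,a_m\}$. *)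

From HB Require Import structures.
From mathcomp Require Import all_boot all_order all_algebra.
Set Implicit Arguments. Unset Strict Implicit. Unset Printing Implicit Defensive.
Import GRing.Theory.
Local Open Scope ring_scope.

Definition is_division_ring (R : unitRingType) : Prop :=
  forall x : R, x != 0 -> x \is a GRing.unit.

Definition is_ring_hom (R S : unitRingType) (f : R -> S) : Prop :=
  [/\ forall x y, f (x + y) = f x + f y,
      forall x y, f (x * y) = f x * f y & f 1 = 1].

Definition is_ring_aut (R : unitRingType) (f : R -> R) : Prop :=
  is_ring_hom f /\ bijective f.

Definition finite_inner_order (D : unitRingType) (sigma : D -> D) : Prop :=
  exists k : nat, (0 < k)%N /\
    exists c : D, c \is a GRing.unit /\
      forall r : D, iter k sigma r = c * r * c^-1.

Definition subring_closed_P (R : unitRingType) (P : R -> Prop) : Prop :=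
  [/\ P 1, forall x y, P x -> P y -> P (x - y) & forall x y, P x -> P y -> P (x * y)].

Definition gen_subring (R : unitRingType) (A : R -> Prop) : R -> Prop :=
  fun x => forall P : R -> Prop, subring_closed_P P -> (forall y, A y -> P y) -> P x.

(* Elements of the image of D[t;sigma] in Q: left D-combinations of powers of t. *)
Definition skew_poly_elt (D Q : unitRingType) (iota : D -> Q) (t : Q) (p : Q) : Prop :=
  exists (n : nat) (c : nat -> D), p = \sum_(i < n) iota (c i) * t ^+ i.

(* (Q, iota, t) is a division ring of left fractions of the skew polynomial ring
   D[t;sigma]: iota : D -> Q is a ring embedding, t iota(a) = iota(sigma a) t,
   the powers of t are left linearly independent over iota(D) (so that the
   subring generated by iota(D) and t is a copy of D[t;sigma]), Q is a division
   ring, and every element of Q is a left fraction p^-1 q of elements of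
   D[t;sigma] with p <> 0. *)
Definition is_skew_frac_field (D Q : unitRingType) (sigma : D -> D)
    (iota : D -> Q) (t : Q) : Prop :=
  [/\ is_division_ring Q,
      is_ring_hom iota,
      forall a : D, t * iota a = iota (sigma a) * t,
      forall (n : nat) (c : nat -> D),
        \sum_(i < n) iota (c i) * t ^+ i = 0 -> forall i, (i < n)%N -> c i = 0
    & forall x : Q, exists p q : Q,
        [/\ skew_poly_elt iota t p, skew_poly_elt iota t q, p != 0 & x = p^-1 * q]].

Definition monomial (Q : unitRingType) (m : nat) (a : 'I_m -> Q)
    (al : {ffun 'I_m -> nat}) : Q :=
  \prod_(i < m) a i ^+ al i.

Definition automorphically_normalizable (D Q : unitRingType) (iota : D -> Q)
    (S : Q -> Prop) : Prop :=
  exists (m : nat) (a : 'I_m -> Q),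
    [/\ (forall i, S (a i)),
        (forall i j, a i * a j = a j * a i),
        (* automorphic w.r.t. pairwise commuting automorphisms *)
        (exists tau : 'I_m -> D -> D,
           [/\ forall i, is_ring_aut (tau i),
               forall i j x, tau i (tau j x) = tau j (tau i x)
             & forall i b, a i * iota b = iota (tau i b) * a i]),
        (* left algebraically independent over D *)
        (forall (s : seq {ffun 'I_m -> nat}) (c : {ffun 'I_m -> nat} -> D),
           uniq s ->
           \sum_(al <- s) iota (c al) * monomial a al = 0 ->
           forall al, al \in s -> c al = 0)
      & (* S finitely generated as a left module over D[a_1,...,a_m] *)
        exists g : seq Q, (forall y, y \in g -> S y) /\
          forall x, S x -> exists r : 'I_(size g) -> Q,
            (forall j, gen_subring (fun y => (exists d, y = iota d) \/ exists i, y = a i) (r j))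
            /\ x = \sum_(j < size g) r j * g`_j].

From HB Require Import structures.
From mathcomp Require Import all_boot all_order all_algebra.
From mathcomp Require Import zify.
From Stdlib Require Import Classical.
Set Implicit Arguments. Unset Strict Implicit. Unset Printing Implicit Defensive.
Import Order.TTheory GRing.Theory Num.Theory.
Local Open Scope ring_scope.

(* Every element of S is a Laurent sum x = sum_z d_z t^z, and if x is
   automorphic with respect to tau then d_z sigma^z(b) = tau(b) d_z for all b and z.
   Two nonzero coefficients at exponents z1 < z2 therefore make sigma^(z2 - z1)
   inner, so when sigma has infinite inner order every automorphic a_i is a
   monomial d t^e.  Two algebraically independent monomials cannot exist, since
   suitable products of their powers have the same exponent; and all exponents of
   the elements of D[d t^e] have the sign of e, so finitely many generators cannot
   reach t^z for z far on the other side.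
   Conversely, if sigma^k is conjugation by c, then u = c^-1 t^k commutes with D,
   a = u + u^-1 is algebraically independent over D because the leading term of
   a^j is u^j, and since t^k = c u and u^2 = a u - 1, S is generated over D[a] by
   the t^r and u t^r with r < k. *)

Lemma int_dependence (e0 e1 : int) : e0 != 0 -> e1 != 0 ->
  exists (p q p' q' : nat), p != p' /\ p%:Z * e0 + q%:Z * e1 = p'%:Z * e0 + q'%:Z * e1.
Proof.
move=> e0_nz e1_nz; have [e01|e01] := ltP (e0 * e1) 0.
- by exists `|e1|%N, `|e0|%N, 0%N, 0%N; split; [lia | nia].
- by exists `|e1|%N, 0%N, 0%N, `|e0|%N; split; [lia | nia].
Qed.

Lemma division_ring_mul_neq0 (R : unitRingType) : is_division_ring R ->
  forall x y : R, x != 0 -> y != 0 -> x * y != 0.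
Proof.
move=> divR x y /divR Ux /divR Uy; have : x * y \is a GRing.unit by rewrite unitrMl.
by apply: contraTneq => ->; rewrite unitr0.
Qed.

Section SubringClosed.
Variables (R : unitRingType) (P : R -> Prop).
Hypothesis closedP : subring_closed_P P.

Lemma subring_closed1 : P 1. Proof. by case: closedP. Qed.

Lemma subring_closedB x y : P x -> P y -> P (x - y).
Proof. by case: closedP => _ PB _; apply: PB. Qed.

Lemma subring_closedM x y : P x -> P y -> P (x * y).
Proof. by case: closedP => _ _ PM; apply: PM. Qed.

Lemma subring_closed0 : P 0.
Proof. by rewrite -(subrr 1); apply: subring_closedB; apply: subring_closed1. Qed.

Lemma subring_closedN x : P x -> P (- x).
Proof. by move=> Px; rewrite -sub0r; apply: subring_closedB => //; apply: subring_closed0. Qed.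

Lemma subring_closedD x y : P x -> P y -> P (x + y).
Proof.
by move=> Px Py; rewrite -[y]opprK; apply: subring_closedB => //; apply: subring_closedN.
Qed.

Lemma subring_closedX x n : P x -> P (x ^+ n).
Proof.
move=> Px; elim: n => [|n IHn]; first by rewrite expr0; apply: subring_closed1.
by rewrite exprS; apply: subring_closedM.
Qed.

Lemma subring_closedXz x q : P x -> P x^-1 -> P (x ^ q).
Proof.
case: q => n Px PxV; first exact: subring_closedX.
by rewrite -[x ^ _]/(x ^- n.+1) -exprVn; apply: subring_closedX.
Qed.

End SubringClosed.

Section LeftSpan.
Variables (R : unitRingType) (P : R -> Prop).
Hypothesis closedP : subring_closed_P P.

Definition left_span (g : seq R) (x : R) :=
  exists r : 'I_(size g) -> R, (forall j, P (r j)) /\ x = \sum_(j < size g) r j * g`_j.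

Lemma left_span0 g : left_span g 0.
Proof.
exists (fun=> 0); split=> [_|]; first exact: subring_closed0.
by rewrite big1 // => j _; rewrite mul0r.
Qed.

Lemma left_spanD g x y : left_span g x -> left_span g y -> left_span g (x + y).
Proof.
move=> [r [Pr ->]] [r' [Pr' ->]]; exists (fun j => r j + r' j); split.
  by move=> j; apply: subring_closedD.
by rewrite -big_split; apply: eq_bigr => j _; rewrite mulrDl.
Qed.

Lemma left_span_mull g y x : P y -> left_span g x -> left_span g (y * x).
Proof.
move=> Py [r [Pr ->]]; exists (fun j => y * r j); split.
  by move=> j; apply: subring_closedM.
by rewrite mulr_sumr; apply: eq_bigr => j _; rewrite mulrA.
Qed.

Lemma left_span_sum g (I : Type) (s : seq I) (F : I -> R) :
  (forall i, left_span g (F i)) -> left_span g (\sum_(i <- s) F i).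
Proof. by move=> gF; apply: big_ind => //; [apply: left_span0 | apply: left_spanD]. Qed.

Lemma left_span_mem g y : y \in g -> left_span g y.
Proof.
move=> yg; pose j0 := Ordinal (etrans (index_mem y g) yg).
exists (fun j => if j == j0 then 1 else 0); split.
  by move=> j; case: eqP => _; [apply: subring_closed1 | apply: subring_closed0].
rewrite (bigD1 j0) //= eqxx mul1r nth_index // big1 ?addr0 // => j /negbTE ->.
by rewrite mul0r.
Qed.

Lemma left_span_mulr g g' w x : (forall y, y \in g -> left_span g' (y * w)) ->
  left_span g x -> left_span g' (x * w).
Proof.
move=> gw [r [Pr ->]]; rewrite mulr_suml; apply: left_span_sum => j.
by rewrite -mulrA; apply: left_span_mull => //; apply/gw/mem_nth.
Qed.

End LeftSpan.

Lemma monomial0 (R : unitRingType) m (a : 'I_m -> R) : monomial a [ffun=> 0%N] = 1.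
Proof. by rewrite /monomial big1 // => i _; rewrite ffunE. Qed.

Lemma monomial_delta (R : unitRingType) m (a : 'I_m -> R) i :
  monomial a [ffun j => (j == i : nat)] = a i.
Proof.
rewrite /monomial (eq_bigr (fun j => if j == i then a j else 1)) => [|j _].
  by rewrite -big_mkcond big_pred1_eq.
by rewrite ffunE; case: eqP.
Qed.

Section GeneratedSubring.
Variables (R : unitRingType) (A : R -> Prop).

Lemma gen_subring_closed : subring_closed_P (gen_subring A).
Proof.
split=> [P [P1 _ _] _ //|x y Ax Ay P PP PA|x y Ax Ay P PP PA]; case: (PP) => _ PB PM.
- by apply: PB; [apply: Ax | apply: Ay].
- by apply: PM; [apply: Ax | apply: Ay].
Qed.

Lemma gen_subring_base y : A y -> gen_subring A y.
Proof. by move=> Ay P _; apply. Qed.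

Lemma gen_subring_min (P : R -> Prop) : subring_closed_P P ->
  (forall y, A y -> P y) -> forall x, gen_subring A x -> P x.
Proof. by move=> PP PA x; apply. Qed.

End GeneratedSubring.

Section RingHom.
Variables (R S : unitRingType) (f : R -> S).
Hypothesis homf : is_ring_hom f.

Lemma ring_hom0 : f 0 = 0.
Proof.
case: homf => fD _ _; apply: (addrI (f 0)).
by rewrite -fD !addr0.
Qed.

Lemma ring_homN x : f (- x) = - f x.
Proof.
case: homf => fD _ _; apply/eqP; rewrite -subr_eq0 opprK -fD.
by rewrite addNr ring_hom0.
Qed.

Lemma ring_hom_sum (I : Type) (r : seq I) (P : pred I) (F : I -> R) :
  f (\sum_(i <- r | P i) F i) = \sum_(i <- r | P i) f (F i).
Proof. by case: homf => fD _ _; apply: (big_morph f fD ring_hom0). Qed.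

Lemma ring_hom_unit x : x \is a GRing.unit -> f x \is a GRing.unit.
Proof.
case: homf => _ fM f1 Ux; apply/unitrP; exists (f x^-1).
by rewrite -!fM mulVr // mulrV // f1.
Qed.

Lemma ring_hom_can g : cancel f g -> cancel g f -> is_ring_hom g.
Proof.
case: homf => fD fM f1 fK gK; have f_inj := can_inj fK.
by split=> [x y|x y|]; apply: f_inj; rewrite ?fD ?fM ?f1 ?gK.
Qed.

Lemma ring_homV x : x \is a GRing.unit -> f x^-1 = (f x)^-1.
Proof.
case: homf => _ fM f1 Ux; apply: (mulrI (ring_hom_unit Ux)).
by rewrite -fM divrr // mulrV ?f1 // ring_hom_unit.
Qed.

End RingHom.

Lemma ring_hom_iter (R : unitRingType) (f : R -> R) n :
  is_ring_hom f -> is_ring_hom (iter n f).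
Proof.
case=> fD fM f1; elim: n => [|n [ID IM I1]]; first by split.
by split=> [x y|x y|] /=; rewrite ?ID ?IM ?I1 ?fD ?fM ?f1.
Qed.

(** * Integer powers of sigma *)

Section IntegerIterates.
Variables (D : unitRingType) (sigma sigma' : D -> D).
Hypotheses (homs : is_ring_hom sigma) (sK : cancel sigma sigma') (sK' : cancel sigma' sigma).

Definition sigmaz (z : int) : D -> D :=
  match z with Posz n => iter n sigma | Negz n => iter n.+1 sigma' end.

Lemma sigmaz_hom z : is_ring_hom (sigmaz z).
Proof. by case: z => n; apply: ring_hom_iter; last exact: ring_hom_can sK'. Qed.

Lemma sigmazS z x : sigmaz (z + 1) x = sigma (sigmaz z x).
Proof.
case: z => [n|[|n]]; first by have -> : Posz n + 1 = Posz n.+1 by lia.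
- by rewrite /= sK'.
- have -> : Negz n.+1 + 1 = Negz n by rewrite !NegzE; lia.
  by rewrite /= sK'.
Qed.

Lemma sigmazP z x : sigmaz (z - 1) x = sigma' (sigmaz z x).
Proof.
case: z => [[|n]|n]; first by [].
- have -> : Posz n.+1 - 1 = Posz n by lia.
  by rewrite /= sK.
- by have -> : Negz n - 1 = Negz n.+1 by rewrite !NegzE; lia.
Qed.

Lemma sigmazD z w x : sigmaz z (sigmaz w x) = sigmaz (z + w) x.
Proof.
case: z => n; elim: n w => [|n IHn] w; first by rewrite add0r.
- have -> : Posz n.+1 + w = (Posz n + w) + 1 by lia.
  by rewrite sigmazS -IHn.
- have -> : Negz 0 + w = w - 1 by rewrite NegzE; lia.
  by rewrite sigmazP.
- have -> : Negz n.+1 + w = (Negz n + w) - 1 by rewrite !NegzE; lia.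
  by rewrite sigmazP -IHn.
Qed.

Lemma sigmaz_neq0 z x : x != 0 -> sigmaz z x != 0.
Proof.
apply: contraNneq => zx0.
by rewrite -[x]/(sigmaz 0 x) -(addNr z) -sigmazD zx0 (ring_hom0 (sigmaz_hom _)).
Qed.

Lemma finite_inner_order_of_intertwiners z1 z2 c1 c2 (tau : D -> D) : z1 < z2 ->
  c1 \is a GRing.unit -> c2 \is a GRing.unit ->
  (forall b, c1 * sigmaz z1 b = tau b * c1) ->
  (forall b, c2 * sigmaz z2 b = tau b * c2) ->
  finite_inner_order sigma.
Proof.
move=> z12 Uc1 Uc2 c1_tw c2_tw; exists `|z2 - z1|%N; split; first by lia.
exists (c2^-1 * c1); split=> [|r]; first by rewrite unitrMl ?unitrV.
have -> : iter `|z2 - z1|%N sigma r = sigmaz z2 (sigmaz (- z1) r).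
  by rewrite sigmazD; have -> : z2 - z1 = `|z2 - z1|%N by lia.
have c1_r := c1_tw (sigmaz (- z1) r); rewrite sigmazD addrN /= in c1_r.
rewrite -[sigmaz z2 _](mulKr Uc2) c2_tw.
have -> : tau (sigmaz (- z1) r) = c1 * r * c1^-1 by rewrite c1_r mulrK.
by rewrite invrM ?unitrV // invrK !mulrA.
Qed.
End IntegerIterates.

(** * Laurent sums in D(t; sigma) *)

Section SkewLaurent.
Variables (D Q : unitRingType) (sigma sigma' : D -> D) (iota : D -> Q) (t : Q).
Hypotheses (divD : is_division_ring D) (divQ : is_division_ring Q).
Hypotheses (homs : is_ring_hom sigma) (sK : cancel sigma sigma') (sK' : cancel sigma' sigma).
Hypotheses (homi : is_ring_hom iota) (t_iota : forall a, t * iota a = iota (sigma a) * t).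
Hypothesis t_free : forall (n : nat) (c : nat -> D),
  \sum_(i < n) iota (c i) * t ^+ i = 0 -> forall i, (i < n)%N -> c i = 0.

Local Notation sigmaz := (sigmaz sigma sigma').

Lemma iotaM x y : iota (x * y) = iota x * iota y. Proof. by case: homi. Qed.
Lemma iota1 : iota 1 = 1. Proof. by case: homi. Qed.
Lemma iota0 : iota 0 = 0. Proof. exact: ring_hom0. Qed.
Lemma iotaN x : iota (- x) = - iota x. Proof. exact: ring_homN. Qed.

Lemma t_unit : t \is a GRing.unit.
Proof.
apply: divQ; apply/eqP => t0.
pose c i := if i == 1%N then 1 else 0 : D.
suff : c 1%N = 0 by move/eqP; rewrite oner_eq0.
apply: (t_free (n := 2)) => //.
by rewrite !big_ord_recr big_ord0 /= t0 iota0 iota1 !mul0r mulr0 !add0r.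
Qed.

Lemma tzD z w : t ^ (z + w) = t ^ z * t ^ w.
Proof. by rewrite exprzDr // t_unit. Qed.

Lemma tX_iota n b : t ^+ n * iota b = iota (iter n sigma b) * t ^+ n.
Proof.
elim: n b => [|n IHn] b; first by rewrite mulr1 mul1r.
by rewrite exprS -mulrA IHn mulrA t_iota -mulrA -exprS.
Qed.

Lemma tz_iota z b : t ^ z * iota b = iota (sigmaz z b) * t ^ z.
Proof.
case: z => n; first exact: tX_iota.
have Utn : t ^+ n.+1 \is a GRing.unit by rewrite unitrX // t_unit.
have := tX_iota n.+1 (sigmaz (Negz n) b).
have -> : iter n.+1 sigma (sigmaz (Negz n) b) = b.
  by rewrite -[iter _ _ _]/(sigmaz n.+1 _) sigmazD // NegzE subrr.
by move=> tnE; rewrite -[RHS](mulKr Utn) (mulrA (t ^+ n.+1)) tnE mulrK.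
Qed.

Definition laurent (s : seq (D * int)) : Q := \sum_(p <- s) iota p.1 * t ^ p.2.
Definition lcoef (s : seq (D * int)) (z : int) : D := \sum_(p <- s | p.2 == z) p.1.
Definition lopp (s : seq (D * int)) := [seq (- p.1, p.2) | p <- s].
Definition lscale (b : D) (s : seq (D * int)) := [seq (b * p.1, p.2) | p <- s].
Definition lmul (s1 s2 : seq (D * int)) :=
  [seq (p.1 * sigmaz p.2 q.1, p.2 + q.2) | p <- s1, q <- s2].

Lemma laurent1 d z : laurent [:: (d, z)] = iota d * t ^ z.
Proof. by rewrite /laurent big_seq1. Qed.

Lemma laurent_cat s1 s2 : laurent (s1 ++ s2) = laurent s1 + laurent s2.
Proof. by rewrite /laurent big_cat. Qed.

Lemma laurent_opp s : laurent (lopp s) = - laurent s.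
Proof. by rewrite /laurent big_map -sumrN; apply: eq_bigr => p _; rewrite iotaN mulNr. Qed.

Lemma laurent_scale b s : laurent (lscale b s) = iota b * laurent s.
Proof. by rewrite /laurent big_map mulr_sumr; apply: eq_bigr => p _; rewrite iotaM mulrA. Qed.

Lemma laurent_mul s1 s2 : laurent (lmul s1 s2) = laurent s1 * laurent s2.
Proof.
rewrite /laurent big_allpairs_dep mulr_suml; apply: eq_bigr => p _.
rewrite mulr_sumr; apply: eq_bigr => q _ /=.
by rewrite mulrA -(mulrA (iota p.1)) tz_iota tzD iotaM !mulrA.
Qed.

Lemma laurent_mul_iota s b :
  laurent s * iota b = laurent [seq (p.1 * sigmaz p.2 b, p.2) | p <- s].
Proof.
rewrite /laurent big_map mulr_suml; apply: eq_bigr => p _ /=.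
by rewrite -mulrA tz_iota mulrA iotaM.
Qed.

Lemma lcoef_cat s1 s2 z : lcoef (s1 ++ s2) z = lcoef s1 z + lcoef s2 z.
Proof. by rewrite /lcoef big_cat. Qed.

Lemma lcoef_opp s z : lcoef (lopp s) z = - lcoef s z.
Proof. by rewrite /lcoef big_map -sumrN. Qed.

Lemma lcoef_scale b s z : lcoef (lscale b s) z = b * lcoef s z.
Proof. by rewrite /lcoef big_map mulr_sumr. Qed.

Lemma lcoef_map_scaler s (f : int -> D) z :
  lcoef [seq (p.1 * f p.2, p.2) | p <- s] z = lcoef s z * f z.
Proof. by rewrite /lcoef big_map mulr_suml; apply: eq_bigr => p /= /eqP ->. Qed.

Definition window (N : nat) : seq int := [seq i%:Z - N%:Z | i <- seq.iota 0 N.*2.+1].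

Lemma window_uniq N : uniq (window N).
Proof. by rewrite map_inj_uniq ?iota_uniq // => i j /addIr []. Qed.

Lemma mem_window N z : (z \in window N) = (`|z| <= N)%N.
Proof.
apply/mapP/idP => [[i] | zN]; first by rewrite mem_iota => ? ->; lia.
by exists `|(z + N%:Z)%R|%N; rewrite ?mem_iota; lia.
Qed.

Lemma laurent_window N s : (forall p, p \in s -> `|p.2| <= N)%N ->
  laurent s = \sum_(z <- window N) iota (lcoef s z) * t ^ z.
Proof.
move=> sN; under eq_bigr do rewrite /lcoef ring_hom_sum // big_distrl /=.
rewrite (eq_bigr _ (fun z _ => big_mkcond _ _)) exchange_big /laurent.
rewrite big_seq [RHS]big_seq; apply: eq_bigr => p /sN pN.
rewrite -big_mkcond -big_filter (eq_filter (a2 := pred1 p.2)) => [|z]; last by rewrite /= eq_sym.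
by rewrite filter_pred1_uniq ?window_uniq ?mem_window // big_seq1.
Qed.

Lemma window_free N (C : int -> D) :
  \sum_(z <- window N) iota (C z) * t ^ z = 0 -> forall z, (`|z| <= N)%N -> C z = 0.
Proof.
move=> C0 z zN.
have shifted : \sum_(i < N.*2.+1) iota (C (i%:Z - N%:Z)) * t ^+ i = 0.
  transitivity ((\sum_(z <- window N) iota (C z) * t ^ z) * t ^ N%:Z); last first.
    by rewrite C0 mul0r.
  rewrite big_map mulr_suml -(subn0 N.*2.+1) -/(index_iota 0 _) big_mkord.
  apply: eq_bigr => i _.
  by rewrite -mulrA -tzD subrK.
have := @t_free _ (fun i : nat => C (i%:Z - N%:Z)) shifted `|(z + N%:Z)%R|%N.
have -> : `|(z + N%:Z)%R|%N%:Z - N%:Z = z by lia.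
by apply; lia.
Qed.

Lemma lcoef_eq0 s : laurent s = 0 -> forall z, lcoef s z = 0.
Proof.
move=> s0 z; pose N := (\sum_(p <- s) `|p.2| + `|z|)%N.
apply: (window_free (N := N)); last by lia.
rewrite -laurent_window // => p ps.
by rewrite /N (big_rem p) //=; lia.
Qed.

Lemma laurent_single s z0 : (forall z, z != z0 -> lcoef s z = 0) ->
  laurent s = iota (lcoef s z0) * t ^ z0.
Proof.
move=> s_z0; pose N := (\sum_(p <- s) `|p.2| + `|z0|)%N.
rewrite (@laurent_window N) => [|p ps]; last by rewrite /N (big_rem p) //=; lia.
rewrite (bigD1_seq z0) ?window_uniq ?mem_window /N //=; last by lia.
by rewrite big1 ?addr0 // => z /s_z0 ->; rewrite iota0 mul0r.
Qed.

Lemma automorphic_lcoef s (tau : D -> D) :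
  (forall b, laurent s * iota b = iota (tau b) * laurent s) ->
  forall z b, lcoef s z * sigmaz z b = tau b * lcoef s z.
Proof.
move=> s_aut z b; apply/eqP; rewrite -subr_eq0; apply/eqP.
rewrite -(lcoef_map_scaler s (fun z => sigmaz z b)) -lcoef_scale -lcoef_opp -lcoef_cat.
apply: lcoef_eq0; rewrite laurent_cat laurent_opp laurent_scale -laurent_mul_iota.
by rewrite s_aut subrr.
Qed.

Definition is_laurent (x : Q) := exists s, x = laurent s.

Lemma is_laurent_closed : subring_closed_P is_laurent.
Proof.
split=> [|x y [s1 ->] [s2 ->]|x y [s1 ->] [s2 ->]].
- by exists [:: (1, 0)]; rewrite laurent1 iota1 mul1r expr0z.
- by exists (s1 ++ lopp s2); rewrite laurent_cat laurent_opp.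
- by exists (lmul s1 s2); rewrite laurent_mul.
Qed.

Lemma automorphic_laurent x (tau : D -> D) : is_laurent x ->
  (forall b, x * iota b = iota (tau b) * x) ->
  finite_inner_order sigma \/ exists d e, x = iota d * t ^ e.
Proof.
move=> [s ->] /automorphic_lcoef s_aut.
have [[z1 [z2 [z12 [nz1 nz2]]]] | single] :=
  classic (exists z1 z2, z1 != z2 /\ lcoef s z1 != 0 /\ lcoef s z2 != 0).
  left; case/lt_total/orP: z12 => [z12|z21].
  - exact: (finite_inner_order_of_intertwiners sK sK' z12 (divD nz1) (divD nz2)
      (s_aut _) (s_aut _)).
  - exact: (finite_inner_order_of_intertwiners sK sK' z21 (divD nz2) (divD nz1)
      (s_aut _) (s_aut _)).
right; have [z0 z0_only] : exists z0, forall z, z != z0 -> lcoef s z = 0.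
  have [[z0 nz0] | all0] := classic (exists z0, lcoef s z0 != 0).
    by exists z0 => z zz0; apply: NNPP => /eqP nz; apply: single; exists z, z0.
  by exists 0 => z _; apply: NNPP => /eqP nz; apply: all0; exists z.
by exists (lcoef s z0), z0; apply: laurent_single.
Qed.

(* With [eps = -1] the exponents are bounded from above. *)
Definition laurent_ge (eps lo : int) (x : Q) :=
  exists s, x = laurent s /\ forall p, p \in s -> lo <= eps * p.2.

Lemma laurent_ge0 eps lo : laurent_ge eps lo 0.
Proof. by exists [::]; rewrite /laurent big_nil. Qed.

Lemma laurent_ge_monomial eps lo d z :
  lo <= eps * z -> laurent_ge eps lo (iota d * t ^ z).
Proof. by move=> lo_z; exists [:: (d, z)]; rewrite laurent1; split=> // p /[!inE] /eqP ->. Qed.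

Lemma laurent_ge_weaken eps lo lo' x :
  lo' <= lo -> laurent_ge eps lo x -> laurent_ge eps lo' x.
Proof. by move=> lo'_lo [s [-> s_lo]]; exists s; split=> // p /s_lo; apply: le_trans. Qed.

Lemma laurent_geD eps lo x y :
  laurent_ge eps lo x -> laurent_ge eps lo y -> laurent_ge eps lo (x + y).
Proof.
move=> [s1 [-> s1_lo]] [s2 [-> s2_lo]]; exists (s1 ++ s2); rewrite laurent_cat.
by split=> // p; rewrite mem_cat => /orP[/s1_lo | /s2_lo].
Qed.

Lemma laurent_geN eps lo x : laurent_ge eps lo x -> laurent_ge eps lo (- x).
Proof.
by move=> [s [-> s_lo]]; exists (lopp s); rewrite laurent_opp; split=> // _ /mapP[p /s_lo ? ->].
Qed.

Lemma laurent_geM eps lo1 lo2 x y : laurent_ge eps lo1 x -> laurent_ge eps lo2 y ->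
  laurent_ge eps (lo1 + lo2) (x * y).
Proof.
move=> [s1 [-> s1_lo]] [s2 [-> s2_lo]]; exists (lmul s1 s2); rewrite laurent_mul.
by split=> // _ /allpairsP[[p q] [/= /s1_lo ? /s2_lo ? ->]]; rewrite mulrDr lerD.
Qed.

Lemma laurent_ge_iotaM eps lo d x :
  laurent_ge eps lo x -> laurent_ge eps lo (iota d * x).
Proof.
move=> x_lo; rewrite -[lo]add0r -[iota d]mulr1 -(expr0z t).
by apply: laurent_geM x_lo; apply: laurent_ge_monomial; rewrite mulr0.
Qed.

Lemma laurent_ge_closed eps : subring_closed_P (laurent_ge eps 0).
Proof.
split=> [|x y x0 y0|x y x0 y0]; last by rewrite -[0]addr0; apply: laurent_geM.
- by move: (@laurent_ge_monomial eps 0 1 0); rewrite mulr0 iota1 mul1r expr0z; apply.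
- by apply: laurent_geD => //; apply: laurent_geN.
Qed.

Lemma is_laurent_ge eps x : is_laurent x -> exists lo, laurent_ge eps lo x.
Proof.
move=> [s ->]; exists (- (\sum_(p <- s) `|(eps * p.2)%R|%N)%:Z); exists s; split=> // p ps.
by rewrite (big_rem p) //=; lia.
Qed.

Lemma laurent_ge_monomial_eq0 eps lo x d z : eps * z < lo -> laurent_ge eps lo x ->
  iota d * t ^ z + x = 0 -> d = 0.
Proof.
move=> z_lo [s [-> s_lo]]; rewrite -laurent1 -laurent_cat => /lcoef_eq0/(_ z).
rewrite lcoef_cat /lcoef big_cons big_nil /= eqxx addr0.
rewrite big_seq_cond big1 ?addr0 // => p /andP[ps /eqP pz].
by have := s_lo p ps; rewrite pz leNgt z_lo.
Qed.

(** * The subring S and algebraic independence *)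

Local Notation S := (gen_subring (fun y : Q => (exists d, y = iota d) \/ y = t \/ y = t^-1)).

Lemma S_laurent x : S x -> is_laurent x.
Proof.
move=> Sx; refine (gen_subring_min is_laurent_closed _ Sx) => _ [[d ->] | [-> | ->]].
- by exists [:: (d, 0)]; rewrite laurent1 expr0z mulr1.
- by exists [:: (1, 1)]; rewrite laurent1 iota1 mul1r expr1z.
- by exists [:: (1, -1)]; rewrite laurent1 iota1 mul1r exprN1.
Qed.

Lemma S_iota d : S (iota d).
Proof. by apply: gen_subring_base; left; exists d. Qed.

Lemma S_tz z : S (t ^ z).
Proof.
by apply: (subring_closedXz (gen_subring_closed _)); apply: gen_subring_base; right;
  [left | right].
Qed.

Definition alg_indep m (a : 'I_m -> Q) :=
  forall (s : seq {ffun 'I_m -> nat}) (c : {ffun 'I_m -> nat} -> D), uniq s ->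
    \sum_(al <- s) iota (c al) * monomial a al = 0 -> forall al, al \in s -> c al = 0.

Lemma alg_indep_monomial_neq m (a : 'I_m -> Q) al1 al2 y : alg_indep a ->
  al1 != al2 -> monomial a al1 != iota y * monomial a al2.
Proof.
move=> a_indep al12; apply/eqP => al1E.
have := a_indep [:: al1; al2] (fun al => if al == al1 then 1 else - y).
rewrite big_cons big_seq1 eqxx eq_sym (negbTE al12) iota1 mul1r iotaN mulNr al1E subrr.
rewrite /= inE al12 => /(_ isT erefl al1 (mem_head _ _)) /eqP.
by rewrite eqxx oner_eq0.
Qed.

Lemma alg_indep1 x :
  (forall n (C : nat -> D), \sum_(i < n) iota (C i) * x ^+ i = 0 ->
     forall i, (i < n)%N -> C i = 0) ->
  alg_indep (fun _ : 'I_1 => x).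
Proof.
move=> x_free s c s_uniq s0 al al_s.
have al_inj (al1 al2 : {ffun 'I_1 -> nat}) : (al1 == al2) = (al1 ord0 == al2 ord0).
  by apply/eqP/eqP => [-> // | al12]; apply/ffunP => i; rewrite (ord1 i).
pose n := (\sum_(al' <- s) al' ord0).+1.
pose C i := \sum_(al' <- s | al' ord0 == i) c al'.
have CE : C (al ord0) = c al.
  rewrite /C -big_filter (eq_filter (a2 := pred1 al)) => [|al']; last by rewrite /= al_inj.
  by rewrite filter_pred1_uniq // big_seq1.
rewrite -CE; apply: (x_free n); last by rewrite /n (big_rem al) //=; lia.
rewrite -[RHS]s0; under eq_bigr do rewrite /C ring_hom_sum // mulr_suml.
rewrite (exchange_big_dep xpredT) //= big_seq [RHS]big_seq; apply: eq_bigr => al' al'_s.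
rewrite /monomial big_ord1 (eq_bigl (fun i : 'I_n => i == al' ord0 :> nat)) => [|i].
  by rewrite (big_ord1_eq _ (fun j => iota (c al') * x ^+ j)) ifT // /n (big_rem al') //=; lia.
exact: eq_sym.
Qed.

Definition nz_monomial (z : int) (x : Q) := exists2 d, d != 0 & x = iota d * t ^ z.

Lemma nz_monomial1 : nz_monomial 0 1.
Proof. by exists 1; rewrite ?oner_neq0 // iota1 mul1r. Qed.

Lemma nz_monomialM z w x y :
  nz_monomial z x -> nz_monomial w y -> nz_monomial (z + w) (x * y).
Proof.
move=> [d d_nz ->] [d' d'_nz ->]; exists (d * sigmaz z d').
  by apply: division_ring_mul_neq0 => //; apply: sigmaz_neq0.
by rewrite mulrA -(mulrA (iota d)) tz_iota tzD iotaM !mulrA.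
Qed.

Lemma nz_monomialX z x n : nz_monomial z x -> nz_monomial (n%:Z * z) (x ^+ n).
Proof.
move=> xz; elim: n => [|n IHn]; first by rewrite mul0r; apply: nz_monomial1.
by rewrite exprSr intS mulrDl mul1r addrC; apply: nz_monomialM.
Qed.

Lemma nz_monomial_monomial m (a : 'I_m -> Q) (e : 'I_m -> int) :
  (forall i, nz_monomial (e i) (a i)) ->
  forall al : {ffun 'I_m -> nat}, nz_monomial (\sum_i (al i)%:Z * e i) (monomial a al).
Proof.
move=> a_e al; apply: (big_rec2 (fun E y => nz_monomial E y)); first exact: nz_monomial1.
by move=> i E y _; apply/nz_monomialM/nz_monomialX.
Qed.

Lemma alg_indep_monomial_exponent m (a : 'I_m -> Q) i d e : alg_indep a ->
  a i = iota d * t ^ e -> d != 0 /\ e != 0.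
Proof.
move=> a_indep ai; pose delta := [ffun j => (j == i : nat)].
have delta_nz : delta != [ffun=> 0%N] by apply/eqP => /ffunP/(_ i); rewrite !ffunE eqxx.
have delta_neq y := alg_indep_monomial_neq y a_indep delta_nz.
rewrite monomial_delta monomial0 ai in delta_neq; split.
- by apply: contra_neq (delta_neq 0) => ->; rewrite iota0 !mul0r.
- by apply: contra_neq (delta_neq d) => ->; rewrite expr0z !mulr1.
Qed.

Lemma alg_indep_monomials m (a : 'I_m -> Q) (d : 'I_m -> D) (e : 'I_m -> int) :
  alg_indep a -> (forall i, a i = iota (d i) * t ^ e i) -> (m <= 1)%N.
Proof.
case: m a d e => [|[|m]] // a d e a_indep a_de; exfalso.
have nz i := alg_indep_monomial_exponent a_indep (a_de i).
have a_nz i : nz_monomial (e i) (a i) by exists (d i); [case: (nz i) | apply: a_de].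
pose i0 : 'I_m.+2 := ord0; pose i1 : 'I_m.+2 := Ordinal (isT : 1 < m.+2)%N.
have [p [q [p' [q' [pp' E]]]]] := int_dependence (proj2 (nz i0)) (proj2 (nz i1)).
pose al (n0 n1 : nat) := [ffun i => if i == i0 then n0 else if i == i1 then n1 else 0%N].
have alE n0 n1 : \sum_i (al n0 n1 i)%:Z * e i = n0%:Z * e i0 + n1%:Z * e i1.
  rewrite (bigD1 i0) // (bigD1 i1) //= big1 ?addr0 => [|i /andP[i_i0 i_i1]].
    by rewrite /al /= !ffunE.
  by rewrite /al /= ffunE (negbTE i_i0) (negbTE i_i1) mul0r.
have [x _ xE] := nz_monomial_monomial a_nz (al p q).
have [x' x'_nz x'E] := nz_monomial_monomial a_nz (al p' q').
have al_neq : al p q != al p' q'.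
  by apply: contra pp' => /eqP/ffunP/(_ i0); rewrite !ffunE eqxx => ->.
have /eqP[] := alg_indep_monomial_neq (x * x'^-1) a_indep al_neq.
by rewrite xE x'E !alE E mulrA -iotaM mulrVK // divD.
Qed.

Lemma laurent_ge_seq eps (g : seq Q) : (forall y, y \in g -> is_laurent y) ->
  exists lo, forall y, y \in g -> laurent_ge eps lo y.
Proof.
elim: g => [|y g IHg] g_laurent; first by exists 0.
have [lo_y y_lo] := is_laurent_ge eps (g_laurent y (mem_head _ _)).
have [lo_g g_lo] := IHg (fun z zg => g_laurent z (mem_behead (s := y :: g) zg)).
exists (- `|lo_y| - `|lo_g|) => z; rewrite inE => /orP[/eqP -> | /g_lo z_lo].
- by apply: (laurent_ge_weaken _ y_lo); lia.
- by apply: (laurent_ge_weaken _ z_lo); lia.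
Qed.

Lemma laurent_ge_not_finite eps (R : Q -> Prop) (g : seq Q) : eps != 0 ->
  (forall y, R y -> laurent_ge eps 0 y) -> (forall y, y \in g -> is_laurent y) ->
  ~ (forall z, left_span R g (t ^ z)).
Proof.
move=> eps_nz R_ge g_laurent span_tz.
have [lo g_lo] := laurent_ge_seq eps g_laurent.
pose z := eps * (- `|lo| - 1).
have [r [Rr tzE]] := span_tz z.
have tz_lo : laurent_ge eps lo (- t ^ z).
  rewrite tzE; apply: laurent_geN; apply: big_ind => [|x y|j _]; first exact: laurent_ge0.
    exact: laurent_geD.
  by rewrite -[lo]add0r; apply: laurent_geM; [apply: R_ge | apply/g_lo/mem_nth].
suff : (1 : D) = 0 by move/eqP; rewrite oner_eq0.
apply: (laurent_ge_monomial_eq0 (z := z) _ tz_lo).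
  have eps2 : 1 <= eps * eps by nia.
  by rewrite /z mulrA; nia.
by rewrite iota1 mul1r subrr.
Qed.

Lemma normalizable_finite_inner_order :
  automorphically_normalizable iota S -> finite_inner_order sigma.
Proof.
move=> [m [a [aS _ [tau [_ _ a_aut]] a_indep [g [gS g_span]]]]].
apply: NNPP => not_fio.
have a_mono i : exists de : D * int, a i = iota de.1 * t ^ de.2.
  have [//|[d [e ->]]] := automorphic_laurent (S_laurent (aS i)) (a_aut i).
  by exists (d, e).
have [de a_de] := fin_all_exists a_mono.
have m_le1 := alg_indep_monomials a_indep a_de.
have [eps [eps_nz a_ge]] : exists eps, eps != 0 /\ forall i, laurent_ge eps 0 (a i).
  have [m0|m_gt0] := posnP m; first by exists 1; split=> // i; have := ltn_ord i; lia.
  pose i0 := Ordinal m_gt0; exists (de i0).2; split.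
    exact: (proj2 (alg_indep_monomial_exponent a_indep (a_de i0))).
  move=> i; have -> : i = i0 by apply/val_inj; have := ltn_ord i; rewrite /=; lia.
  by rewrite a_de; apply: laurent_ge_monomial; nia.
apply: (laurent_ge_not_finite eps_nz _ (fun y yg => S_laurent (gS y yg))
  (fun z => g_span _ (S_tz z))) => y Ry.
refine (gen_subring_min (laurent_ge_closed eps) _ Ry) => _ [[d ->] | [i ->]] //.
by rewrite -[iota d]mulr1 -(expr0z t); apply: laurent_ge_monomial; rewrite mulr0.
Qed.

(** * The case of finite inner order *)

Section FiniteInnerOrder.
Variables (k : nat) (c : D).
Hypotheses (k_gt0 : (0 < k)%N) (c_unit : c \is a GRing.unit).
Hypothesis sigmak : forall r, iter k sigma r = c * r * c^-1.

Definition u := iota c^-1 * t ^+ k.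
Definition a := u + u^-1.

Lemma iota_c_unit : iota c \is a GRing.unit.
Proof. exact: ring_hom_unit. Qed.

Lemma u_unit : u \is a GRing.unit.
Proof. by rewrite unitrMr ?unitrX ?t_unit // (ring_homV homi c_unit) unitrV iota_c_unit. Qed.

Lemma u_comm b : GRing.comm u (iota b).
Proof.
rewrite /GRing.comm /u -mulrA tX_iota sigmak !iotaM !mulrA -iotaM mulVr //.
by rewrite iota1 mul1r.
Qed.

Lemma a_comm b : GRing.comm a (iota b).
Proof.
have uVc := commr_sym (commrV (commr_sym (u_comm b))).
by rewrite /GRing.comm /a mulrDl mulrDr u_comm uVc.
Qed.

Lemma tXk : t ^+ k = iota c * u.
Proof. by rewrite /u mulrA -iotaM mulrV // iota1 mul1r. Qed.

Lemma uV : u^-1 = iota (sigmaz (- k%:Z) c) * t ^ (- k%:Z).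
Proof.
have Utk : t ^+ k \is a GRing.unit by rewrite unitrX // t_unit.
have Uic : iota c^-1 \is a GRing.unit by rewrite (ring_homV homi c_unit) unitrV iota_c_unit.
by rewrite /u invrM // (ring_homV homi c_unit) invrK -tz_iota exprnN.
Qed.

Lemma uX j : u ^+ j = iota (c^-1 ^+ j) * t ^+ (j * k).
Proof.
elim: j => [|j IHj]; first by rewrite !expr0 iota1 mul1r.
by rewrite exprS IHj mulrA u_comm /u -!mulrA -exprD -mulSn mulrA -iotaM -exprSr.
Qed.

Lemma u_ge : laurent_ge (-1) (- k%:Z) u.
Proof. by rewrite /u -[t ^+ k]/(t ^ k%:Z); apply: laurent_ge_monomial; rewrite mulN1r. Qed.

Lemma uV_ge : laurent_ge (-1) k%:Z u^-1.
Proof. by rewrite uV; apply: laurent_ge_monomial; rewrite mulN1r opprK. Qed.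

Lemma a_ge : laurent_ge (-1) (- k%:Z) a.
Proof. by apply: laurent_geD; [exact: u_ge | apply: (laurent_ge_weaken _ uV_ge); lia]. Qed.

Lemma uX_ge j : laurent_ge (-1) (- (j * k)%:Z) (u ^+ j).
Proof. by rewrite uX -[t ^+ _]/(t ^ _%:Z); apply: laurent_ge_monomial; rewrite mulN1r. Qed.

Lemma a_pow_lead j :
  exists2 y, a ^+ j = u ^+ j + y & laurent_ge (-1) (1 - (j * k)%:Z) y.
Proof.
elim: j => [|j [y ajE y_ge]]; first by exists 0; [rewrite addr0 | exact: laurent_ge0].
exists (u ^+ j * u^-1 + y * a).
  by rewrite exprSr ajE mulrDl {1}/a mulrDr -exprSr addrA.
apply: laurent_geD.
- by apply: (laurent_ge_weaken _ (laurent_geM (uX_ge j) uV_ge)); lia.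
- by apply: (laurent_ge_weaken _ (laurent_geM y_ge a_ge)); lia.
Qed.

Lemma a_pow_ge j : laurent_ge (-1) (- (j * k)%:Z) (a ^+ j).
Proof.
have [y -> y_ge] := a_pow_lead j.
by apply: laurent_geD; [exact: uX_ge | apply: (laurent_ge_weaken _ y_ge); lia].
Qed.

Lemma a_pow_free n (C : nat -> D) :
  \sum_(i < n) iota (C i) * a ^+ i = 0 -> forall i, (i < n)%N -> C i = 0.
Proof.
elim: n => [//|n IHn]; rewrite big_ord_recr /= => sum0.
have [y anE y_ge] := a_pow_lead n.
have low : laurent_ge (-1) (1 - (n * k)%:Z)
    (\sum_(i < n) iota (C i) * a ^+ i + iota (C n) * y).
  apply: laurent_geD; last exact: laurent_ge_iotaM.
  apply: big_ind => [|x x'|i _]; [exact: laurent_ge0 | exact: laurent_geD |].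
  apply/laurent_ge_iotaM/(laurent_ge_weaken _ (a_pow_ge i)).
  by have := ltn_ord i; nia.
(* Only [iota (C n) * u ^+ n] contributes to the exponent [n * k]. *)
have Cn0 : C n * c^-1 ^+ n = 0.
  apply: (laurent_ge_monomial_eq0 (z := (n * k)%:Z) _ low); first by lia.
  by rewrite iotaM -mulrA -[t ^ _]/(t ^+ (n * k)) -uX addrCA -mulrDr -anE.
have Ucn : c^-1 ^+ n \is a GRing.unit by rewrite unitrX // unitrV.
have Cn : C n = 0 by rewrite -[C n](mulrK Ucn) Cn0 mul0r.
move: sum0; rewrite Cn iota0 mul0r addr0 => /IHn C0 i.
by rewrite ltnS leq_eqVlt => /orP[/eqP -> // | /C0].
Qed.

Lemma S_u : S u.
Proof. by apply: (subring_closedM (gen_subring_closed _)); [apply: S_iota | apply: (S_tz k)]. Qed.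

Lemma S_a : S a.
Proof.
apply: (subring_closedD (gen_subring_closed _)); first exact: S_u.
by rewrite uV; apply: (subring_closedM (gen_subring_closed _)); [apply: S_iota | apply: S_tz].
Qed.

Local Notation R := (gen_subring (fun y : Q => (exists d, y = iota d) \/ exists i : 'I_1, y = a)).

Lemma R_closed : subring_closed_P R. Proof. exact: gen_subring_closed. Qed.
Lemma R_iota d : R (iota d). Proof. by apply: gen_subring_base; left; exists d. Qed.
Lemma R_a : R a. Proof. by apply: gen_subring_base; right; exists ord0. Qed.

Lemma u_span q : left_span R [:: 1; u] (u ^ q).
Proof.
have mem1 : left_span R [:: 1; u] 1 by apply: (left_span_mem R_closed); rewrite mem_head.
have memu : left_span R [:: 1; u] u by apply: (left_span_mem R_closed); rewrite !inE eqxx orbT.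
have R_N1 : R (-1) := subring_closedN R_closed (subring_closed1 R_closed).
have spanM w : left_span R [:: 1; u] (1 * w) -> left_span R [:: 1; u] (u * w) ->
    forall x, left_span R [:: 1; u] x -> left_span R [:: 1; u] (x * w).
  by move=> span1w spanuw x; apply: (left_span_mulr R_closed) => y /[!inE] /orP[] /eqP ->.
have span_u := spanM u; have span_uV := spanM u^-1.
have uu : u * u = a * u + (-1) * 1 by rewrite mulN1r /a mulrDl mulVr ?u_unit // addrK.
have uV1 : 1 * u^-1 = a * 1 + (-1) * u by rewrite mul1r mulr1 mulN1r /a addrC addKr.
case: q => n.
  elim: n => [|n IHn]; first exact: mem1.
  rewrite -[u ^ _]/(u ^+ n.+1) exprSr; apply: span_u => //; first by rewrite mul1r.
  by rewrite uu; apply: (left_spanD R_closed); apply: (left_span_mull R_closed) => //; apply: R_a.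
rewrite -[u ^ _]/(u ^- n.+1) -exprVn; elim: n.+1 => [|m IHm]; first by rewrite expr0.
rewrite exprSr; apply: span_uV => //; last by rewrite divrr ?u_unit.
by rewrite uV1; apply: (left_spanD R_closed); apply: (left_span_mull R_closed) => //; apply: R_a.
Qed.

Definition gens := [seq t ^+ r | r <- seq.iota 0 k] ++ [seq u * t ^+ r | r <- seq.iota 0 k].

Lemma gens_S y : y \in gens -> S y.
Proof.
rewrite mem_cat => /orP[] /mapP[r _ ->]; first exact: (S_tz r).
by apply: (subring_closedM (gen_subring_closed _)); [apply: S_u | apply: (S_tz r)].
Qed.

Lemma tz_decomp z : exists q (r : nat), (r < k)%N /\ t ^ z = iota c ^ q * u ^ q * t ^+ r.
Proof.
have k_pos : 0 < k%:Z by rewrite ltz_nat.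
have mod_ge0 := modz_ge0 z (lt0r_neq0 k_pos).
exists (z %/ k)%Z, `|(z %% k)%Z|%N; split; first by have := ltz_pmod z k_pos; lia.
have cu : GRing.comm (iota c) u := commr_sym (u_comm c).
rewrite -exprMz_comm ?iota_c_unit ?u_unit // -tXk -[t ^+ k]/(t ^ k%:Z) exprz_exp.
rewrite -[t ^+ _]/(t ^ (`|(z %% k)%Z|%N : int)) gez0_abs //.
by rewrite -tzD mulrC -divz_eq.
Qed.

Lemma tz_span z : left_span R gens (t ^ z).
Proof.
have [q [r [r_lt ->]]] := tz_decomp z.
have R_cq : R (iota c ^ q).
  apply: (subring_closedXz R_closed); first exact: R_iota.
  by rewrite -(ring_homV homi c_unit); apply: R_iota.
rewrite -mulrA; apply: (left_span_mull R_closed R_cq).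
apply: (left_span_mulr R_closed _ (u_span q)) => y /[!inE] /orP[] /eqP ->;
  apply: (left_span_mem R_closed); rewrite mem_cat; apply/orP; [left; rewrite mul1r | right];
  by apply: map_f; rewrite mem_iota.
Qed.

Lemma S_span x : S x -> left_span R gens x.
Proof.
move=> /S_laurent[s ->]; apply: (left_span_sum R_closed) => p.
exact: (left_span_mull R_closed (R_iota _) (tz_span _)).
Qed.

End FiniteInnerOrder.

Lemma finite_inner_order_normalizable :
  finite_inner_order sigma -> automorphically_normalizable iota S.
Proof.
move=> [k [k_gt0 [c [c_unit sigmak]]]].
exists 1%N, (fun=> a k c); split=> //.
- by move=> _; apply: S_a.
- exists (fun=> id); split=> // [_ | _ b]; first by split; [split | exists id].
  exact: a_comm.
- exact/alg_indep1/a_pow_free.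
- by exists (gens k c); split; [apply: gens_S | apply: S_span].
Qed.

End SkewLaurent.

Unset Implicit Arguments.

Theorem lemma5p6 (D : unitRingType) (HD : is_division_ring D)
    (sigma : D -> D) (Hsigma : is_ring_aut sigma)
    (Q : unitRingType) (iota : D -> Q) (t : Q)
    (HQ : is_skew_frac_field sigma iota t) :
  automorphically_normalizable iota
    (gen_subring (fun y : Q => (exists d, y = iota d) \/ y = t \/ y = t^-1))
  <-> finite_inner_order sigma.
Proof.
have [homs [sigma' sK sK']] := Hsigma.
have [divQ homi t_iota t_free _] := HQ.
split; [exact: normalizable_finite_inner_order | exact: finite_inner_order_normalizable].
Qed.
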